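(* Fix a merge tree $(T,f)$. The maps $\mathcal L$ and $\mathcal T$ are well defined and mutually inverse, hence give a bijection between the set of ordered merge trees $(T,f,(\le_h))$ and the set of leaf-ordered merge trees $(T,f,\sqsubseteq_L)$; that is, $\mathcal T(\mathcal L((T,f,(\le_h))))=(T,f,(\le_h))$ for every layer-order $(\le_h)$ and $\mathcal L(\mathcal T((T,f,\sqsubseteq_L)))=(T,f,\sqsubseteq_L)$ for every leaf-order $\sqsubseteq_L$.
   Context: A merge tree $(T,f)$: a finite rooted tree $T$ identified with its topological realisation, with a continuous $f\colon T\to\mathbb{R}\cup\{\infty\}$ strictly increasing towards the root, $f(v)=\infty$ iff $v$ is the root; the lowest leaf has height $0$; $L(T)$ is the set of leaves. $x_1\preceq x_2$ iff there is an $f$-increasing path from $x_1$ to $x_2$; $T_x$ is the subtree of descendants of $x$; $\mathrm{lca}$ is the lowest common ancestor; $\mathrm{anc}_h(x)$ is the unique ancestor of $x$ at height $h\ge f(x)$; $\mathbb{L}_h=\{x:f(x)=h\}$. A layer-order is a family $(\le_h)_{h\ge0}$ of total orders on the $\mathbb{L}_h$ that is consistent: for $h_1\le h_2$ and $x_1,x_2\in\mathbb{L}_{h_1}$, $x_1\le_{h_1}x_2$ implies $\mathrm{anc}_{h_2}(x_1)\le_{h_2}\mathrm{anc}_{h_2}(x_2)$; $(T,f,(\le_h))$ is an ordered merge tree. A leaf-order is a total order $\sqsubseteq_L$ on $L(T)$ that separates subtrees: for leaves $u,u_1,u_2$ with $u_1\sqsubseteq_L u\sqsubseteq_L u_2$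 we have $u\in T_{\mathrm{lca}(u_1,u_2)}$; $(T,f,\sqsubseteq_L)$ is a leaf-ordered merge tree. $\mathcal L((T,f,(\le_h)))=(T,f,\sqsubseteq_L)$ where, for leaves $u_1,u_2$ and $h=\max(f(u_1),f(u_2))$, $u_1\sqsubseteq_L u_2$ iff $\mathrm{anc}_h(u_1)\le_h\mathrm{anc}_h(u_2)$. $\mathcal T((T,f,\sqsubseteq_L))=(T,f,(\le_h))$ where, for $x_1,x_2\in\mathbb{L}_h$, $x_1\le_h x_2$ iff $x_1=x_2$ or $u_1\sqsubseteq_L u_2$ for all leaves $u_1\in T_{x_1}$, $u_2\in T_{x_2}$. *)

From Stdlib Require Import Reals.
From mathcomp Require Import all_boot.

Set Implicit Arguments.
Unset Strict Implicit.
Unset Printing Implicit Defensive.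

Local Open Scope R_scope.

(* A merge tree (T,f): a finite rooted tree given by a parent map on a finite
   vertex type V (the root is its own parent), with real heights f on the
   non-root vertices, f strictly increasing towards the root; the root has
   height +infinity (f on the root is irrelevant). *)
Record merge_tree := MergeTree {
  mt_V : finType;
  mt_root : mt_V;
  mt_par : mt_V -> mt_V;
  mt_f : mt_V -> R;
  mt_par_root : mt_par mt_root = mt_root;
  mt_rooted : forall v, exists k, iter k mt_par v = mt_root;
  mt_incr : forall v, v <> mt_root -> mt_par v <> mt_root ->
              mt_f v < mt_f (mt_par v);
  mt_low0 : exists u, (u <> mt_root /\ forall w, mt_par w <> u) /\ mt_f u = 0;
  mt_lowest : forall u, (u <> mt_root /\ forall w, mt_par w <> u) -> 0 <= mt_f u
}.

Section MergeTreeDefs.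
Variable M : merge_tree.
Local Notation V := (mt_V M).
Local Notation root := (mt_root M).
Local Notation par := (@mt_par M).
Local Notation f := (@mt_f M).

Definition leaf (u : V) : Prop := u <> root /\ forall w, par w <> u.

(* Points of the topological realisation: [Pt v h] is the point at height h
   on the edge from the non-root vertex v to its parent (h = f v is the vertex
   v itself); [Top] is the root (height +infinity). *)
Inductive pt := Pt of V & R | Top.

Definition valid (x : pt) : Prop :=
  match x with
  | Pt v h => v <> root /\ f v <= h /\ (par v = root \/ h < f (par v))
  | Top => True
  end.

Definition on_layer (h : R) (x : pt) : Prop :=
  valid x /\ match x with Pt _ h' => h' = h | Top => False end.

(* x1 ⪯ x2 : there is an f-increasing path from x1 to x2 *)
Definition prec (x y : pt) : Prop :=
  match x, y with
  | _, Top => True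
  | Top, Pt _ _ => False
  | Pt v h, Pt w h' => h <= h' /\ exists k, iter k par v = w
  end.

Definition is_anc (h : R) (x y : pt) : Prop := on_layer h y /\ prec x y.

Definition is_lca (x1 x2 z : pt) : Prop :=
  valid z /\ prec x1 z /\ prec x2 z /\
  forall z', valid z' -> prec x1 z' -> prec x2 z' -> prec z z'.

Definition leafpt (u : V) : pt := Pt u (f u).

Definition is_layer_order (le : R -> pt -> pt -> Prop) : Prop :=
  (forall h, 0 <= h ->
     (forall x, on_layer h x -> le h x x) /\
     (forall x y, on_layer h x -> on_layer h y -> le h x y -> le h y x -> x = y) /\
     (forall x y z, on_layer h x -> on_layer h y -> on_layer h z ->
        le h x y -> le h y z -> le h x z) /\
     (forall x y, on_layer h x -> on_layer h y -> le h x y \/ le h y x)) /\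
  (forall h1 h2 x1 x2 y1 y2, 0 <= h1 -> h1 <= h2 ->
     on_layer h1 x1 -> on_layer h1 x2 -> le h1 x1 x2 ->
     is_anc h2 x1 y1 -> is_anc h2 x2 y2 -> le h2 y1 y2).

Definition is_leaf_order (lo : V -> V -> Prop) : Prop :=
  ((forall u, leaf u -> lo u u) /\
   (forall u v, leaf u -> leaf v -> lo u v -> lo v u -> u = v) /\
   (forall u v w, leaf u -> leaf v -> leaf w -> lo u v -> lo v w -> lo u w) /\
   (forall u v, leaf u -> leaf v -> lo u v \/ lo v u)) /\
  (forall u u1 u2 z, leaf u -> leaf u1 -> leaf u2 ->
     lo u1 u -> lo u u2 -> is_lca (leafpt u1) (leafpt u2) z ->
     prec (leafpt u) z).

Definition L_map (le : R -> pt -> pt -> Prop) : V -> V -> Prop :=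
  fun u1 u2 => exists y1 y2,
    is_anc (Rmax (f u1) (f u2)) (leafpt u1) y1 /\
    is_anc (Rmax (f u1) (f u2)) (leafpt u2) y2 /\
    le (Rmax (f u1) (f u2)) y1 y2.

Definition T_map (lo : V -> V -> Prop) : R -> pt -> pt -> Prop :=
  fun h x1 x2 => x1 = x2 \/
    forall u1 u2, leaf u1 -> leaf u2 ->
      prec (leafpt u1) x1 -> prec (leafpt u2) x2 -> lo u1 u2.

End MergeTreeDefs.

From Stdlib Require Import Reals Lra Classical Wf_nat.
From mathcomp Require Import all_boot.

Set Implicit Arguments.
Unset Strict Implicit.
Unset Printing Implicit Defensive.

Local Open Scope R_scope.

(* Two facts about a layer L_h drive both directions.  First, a leaf lies
   below at most one point of L_h, and every point of L_h has a leaf below it.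
   Second, consistency lets a comparison of ancestors at max (f u1) (f u2) be
   lifted to any higher layer, so for leaves u1, u2 below distinct points
   x1, x2 of L_h we get x1 <=_h x2 iff L le u1 u2; this gives T (L le) = le
   and the axioms of a leaf-order for L le.  Conversely, by the separation
   property the leaves below a point form an interval of a leaf-order, so the
   leaves below two distinct points of a layer are never interleaved; hence
   comparing points through any of their leaves is total, antisymmetric and
   consistent, and L (T lo) = lo. *)

Section Tree.
Variable M : merge_tree.
Local Notation V := (mt_V M).
Local Notation root := (mt_root M).
Local Notation par := (@mt_par M).
Local Notation f := (@mt_f M).

Definition below (v w : V) : Prop := exists k, iter k par v = w.

Lemma iter_par_root k : iter k par root = root.
Proof. by elim: k => //= k ->; exact: mt_par_root. Qed.

Lemma below_refl v : below v v.
Proof. by exists 0%N. Qed.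

Lemma below_trans u v w : below u v -> below v w -> below u w.
Proof. by move=> [i <-] [j <-]; exists (j + i)%N; rewrite iterD. Qed.

Lemma below_par v : below v (par v).
Proof. by exists 1%N. Qed.

Lemma below_root w : below root w -> w = root.
Proof. by move=> [k <-]; exact: iter_par_root. Qed.

Lemma below_total v a b : below v a -> below v b -> below a b \/ below b a.
Proof.
move=> [i <-] [j <-]; case: (leqP i j) => [/subnK|/ltnW/subnK] e.
- by left; exists (j - i)%N; rewrite -iterD e.
- by right; exists (i - j)%N; rewrite -iterD e.
Qed.

Lemma below_par_or_eq v w : below v w -> v = w \/ below (par v) w.
Proof. by move=> [[|k] <-]; [left | right; exists k; rewrite iterSr]. Qed.

Lemma f_below v w : below v w -> w <> root -> f v <= f w.
Proof.
move=> [k <-]; elim: k => [|k IH] /= w_nroot; first exact: Rle_refl.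
have k_nroot : iter k par v <> root.
  by move=> e; apply: w_nroot; rewrite e mt_par_root.
have := mt_incr k_nroot w_nroot; have := IH k_nroot; lra.
Qed.

Lemma leaf_below_eq u v : leaf u -> below v u -> v = u.
Proof. by move=> [_ childless] [[|k] //= e]; case: (childless _ e). Qed.

Lemma vertex_valid v : v <> root -> valid (Pt v (f v)).
Proof.
move=> v_nroot; split=> //; split; first exact: Rle_refl.
by case: (classic (par v = root)) => e; [left | right; exact: mt_incr].
Qed.

Lemma leaf_on_layer u : leaf u -> on_layer (f u) (leafpt u).
Proof. by move=> [u_nroot _]; split=> //; exact: vertex_valid. Qed.

Lemma valid_below_eq h1 h2 a b :
  valid (Pt a h1) -> valid (Pt b h2) -> h1 <= h2 -> below b a -> a = b.
Proof.
move=> [a_nroot [fa _]] [_ [_ [pb_root|pb_above]]] h12 /below_par_or_eq [->//|pb_a].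
  by case: a_nroot; apply: below_root; rewrite -pb_root.
have pb_nroot : par b <> root by move=> e; apply: a_nroot; apply: below_root; rewrite -e.
have := f_below pb_a a_nroot; lra.
Qed.

Lemma valid_below h1 h2 v a b : below v a -> below v b ->
  valid (Pt a h1) -> valid (Pt b h2) -> h1 <= h2 -> below a b.
Proof.
move=> va vb a_valid b_valid h12; case: (below_total va vb) => // ba.
by rewrite (valid_below_eq a_valid b_valid h12 ba); exact: below_refl.
Qed.

Lemma edge_at_height v h : v <> root -> f v <= h -> exists2 a, below v a & valid (Pt a h).
Proof.
have [k] := mt_rooted v; elim: k v => [|k IH] v; first by move=> /= ->.
rewrite iterSr => pv_root v_nroot fv.
case: (classic (par v = root \/ h < f (par v))) => [top|/not_or_and [pv_nroot /Rnot_lt_le fpv]].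
  by exists v; [exact: below_refl | split].
have [a pv_a a_valid] := IH _ pv_root pv_nroot fpv.
by exists a => //; exact: below_trans (below_par v) pv_a.
Qed.

(* Passing to a child strictly lowers the number of vertices below height f w. *)
Lemma exists_leaf_below v : v <> root -> exists2 u, leaf u & below u v.
Proof.
move=> v_nroot.
pose lower w := [pred x : V | if Rlt_dec (f x) (f w) then true else false].
suff: forall n w, w <> root -> (#|lower w| < n)%N -> exists2 u, leaf u & below u w.
  by apply; [exact: v_nroot | exact: ltnSn].
elim=> [|n IH] w w_nroot lt_n //.
case: (classic (leaf w)) => [w_leaf|/not_and_or [//|/not_all_ex_not [x /NNPP pxw]]].
  by exists w => //; exact: below_refl.
have x_nroot : x <> root by move=> e; apply: w_nroot; rewrite -pxw e mt_par_root.
have fxw : f x < f w by rewrite -pxw; apply: mt_incr; rewrite // pxw.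
have lower_x : (#|lower x| < #|lower w|)%N.
  rewrite (cardD1 x (lower w)).
  have -> : x \in lower w by rewrite inE; case: Rlt_dec.
  rewrite add1n ltnS; apply: subset_leq_card; apply/subsetP => y.
  rewrite !inE; case: Rlt_dec => // fyx _; apply/andP; split.
    by apply/eqP => e; subst y; lra.
  by case: Rlt_dec => // ?; lra.
have [u u_leaf ux] := IH x x_nroot (leq_trans lower_x lt_n).
by exists u => //; apply: below_trans ux _; rewrite -pxw; exact: below_par.
Qed.

Lemma prec_trans (x y z : pt M) : prec x y -> prec y z -> prec x z.
Proof.
case: z => [c hc|]; last by case: x.
case: y => [b hb|]; last by case: x.
case: x => [a ha|] //= [hab ab] [hbc bc]; split; [lra | exact: below_trans ab bc].
Qed.

Lemma anc_trans h (x y z : pt M) : prec x y -> is_anc h y z -> is_anc h x z.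
Proof. by move=> xy [z_layer yz]; split=> //; exact: prec_trans xy yz. Qed.

Lemma anc_uniq h (x y1 y2 : pt M) : is_anc h x y1 -> is_anc h x y2 -> y1 = y2.
Proof.
case: y1 => [a h1|] [[a_valid /= e1] xa] //; subst h1.
case: y2 => [b h2|] [[b_valid /= e2] xb] //; subst h2.
case: x xa xb => [v h0|] //= [_ va] [_ vb].
have ab := valid_below va vb a_valid b_valid (Rle_refl h).
by rewrite (valid_below_eq b_valid a_valid (Rle_refl h) ab).
Qed.

Lemma anc_lift h1 h2 (x y z : pt M) :
  h1 <= h2 -> is_anc h1 x y -> is_anc h2 x z -> is_anc h2 y z.
Proof.
case: y => [a h'|] h12 [[a_valid /= e1] xa] //; subst h'.
case: z => [b h'|] [[b_valid /= e2] xb] //; subst h'.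
split; first by split.
case: x xa xb => [v h0|] //= [_ va] [_ vb].
by split=> //; exact: valid_below va vb a_valid b_valid h12.
Qed.

Lemma anc_self h (y : pt M) : on_layer h y -> is_anc h y y.
Proof.
case: y => [a h'|] [y_valid /= e] //; subst h'.
by split; [split | split; [exact: Rle_refl | exact: below_refl]].
Qed.

Lemma anc_exists h (v : V) h0 : valid (Pt v h0) -> h0 <= h -> exists y, is_anc h (Pt v h0) y.
Proof.
move=> [v_nroot [fv _]] hh.
have [a va a_valid] := edge_at_height v_nroot (Rle_trans _ _ _ fv hh).
by exists (Pt a h).
Qed.

Lemma leaf_anc_exists h (u : V) : leaf u -> f u <= h -> exists y, is_anc h (leafpt u) y.
Proof. by move=> /leaf_on_layer [u_valid _]; exact: anc_exists. Qed.

Lemma anc_leaf_height h (u : V) y : is_anc h (leafpt u) y -> f u <= h.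
Proof. by case: y => [a h'|] [[_ /= e]] // [fu _]; rewrite -e. Qed.

Lemma anc_leaf_nonneg h (u : V) y : leaf u -> is_anc h (leafpt u) y -> 0 <= h.
Proof. by move=> /mt_lowest fu /anc_leaf_height; lra. Qed.

Lemma exists_leaf_prec h (x : pt M) : on_layer h x -> exists2 u, leaf u & prec (leafpt u) x.
Proof.
case: x => [v h'|] [x_valid /= e] //; subst h'.
case: x_valid => v_nroot [fv _].
have [u u_leaf uv] := exists_leaf_below v_nroot.
by exists u => //; split=> //; have := f_below uv v_nroot; lra.
Qed.

Lemma leaf_common_anc_eq h (u v : V) y : leaf u -> leaf v -> h = f u \/ h = f v ->
  is_anc h (leafpt u) y -> is_anc h (leafpt v) y -> u = v.
Proof.
have key u' v' : leaf v' -> h = f v' ->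
    is_anc h (leafpt u') y -> is_anc h (leafpt v') y -> u' = v'.
  move=> v_leaf -> au av; move: au; rewrite (anc_uniq av (anc_self (leaf_on_layer v_leaf))).
  by case=> _ [_ /leaf_below_eq]; apply.
by move=> u_leaf v_leaf [e|e] au av; [symmetry; apply: key av au | apply: key au av].
Qed.

(* The lca is the first ancestor of p lying above q, or Top if that is the root. *)
Lemma lca_exists (p q : V) : exists z, is_lca (leafpt p) (leafpt q) z.
Proof.
pose common k := below q (iter k par p).
have [k [[ck k_least] _]] : has_unique_least_element Peano.le common.
  apply: dec_inh_nat_subset_has_unique_least_element => [n|]; first exact: classic.
  have [i pi] := mt_rooted p; have [j qj] := mt_rooted q.
  by exists i; rewrite /common pi; exists j.
set c := iter k par p in ck.
have pc : below p c by exists k.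
have c_least w : below p w -> below q w -> below c w.
  move=> [j <-] qw; have /leP kj := k_least j qw.
  by exists (j - k)%N; rewrite /c -iterD subnK.
case: (classic (c = root)) => [c_root|c_nroot].
  exists (Top M); do 3!split=> //.
  case=> [w h|] // [w_nroot _] [_ pw] [_ qw].
  by case: w_nroot; apply: below_root; rewrite -c_root; exact: c_least.
exists (Pt c (f c)); split; first exact: vertex_valid.
split; first by split=> //; exact: f_below pc c_nroot.
split; first by split=> //; exact: f_below ck c_nroot.
case=> [w h|] // [w_nroot [fw _]] [_ pw] [_ qw]; have cw := c_least w pw qw.
by split=> //; have := f_below cw w_nroot; lra.
Qed.

Lemma leaf_ancs_at_max (u1 u2 : V) : leaf u1 -> leaf u2 ->
  exists y1 y2, is_anc (Rmax (f u1) (f u2)) (leafpt u1) y1 /\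
                is_anc (Rmax (f u1) (f u2)) (leafpt u2) y2.
Proof.
move=> u1_leaf u2_leaf.
have [y1 a1] := leaf_anc_exists u1_leaf (Rmax_l (f u1) (f u2)).
have [y2 a2] := leaf_anc_exists u2_leaf (Rmax_r (f u1) (f u2)).
by exists y1, y2.
Qed.

End Tree.

Lemma Rmax_eq_or a b : Rmax a b = a \/ Rmax a b = b.
Proof. by apply: (Rmax_case a b (fun m => m = a \/ m = b)); [left | right]. Qed.

Section LayerOrderToLeafOrder.
Variables (M : merge_tree) (le : R -> pt M -> pt M -> Prop).
Hypothesis le_layer : is_layer_order le.
Local Notation V := (mt_V M).
Local Notation f := (@mt_f M).
Local Notation L := (L_map le).

Lemma layer_le_refl h x : 0 <= h -> on_layer h x -> le h x x.
Proof. by move=> h0; have [refl _] := le_layer.1 h h0; exact: refl. Qed.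

Lemma layer_le_anti h x y : 0 <= h -> on_layer h x -> on_layer h y ->
  le h x y -> le h y x -> x = y.
Proof. by move=> h0; have [_ [anti _]] := le_layer.1 h h0; exact: anti. Qed.

Lemma layer_le_trans h x y z : 0 <= h -> on_layer h x -> on_layer h y -> on_layer h z ->
  le h x y -> le h y z -> le h x z.
Proof. by move=> h0; have [_ [_ [trans _]]] := le_layer.1 h h0; exact: trans. Qed.

Lemma layer_le_total h x y : 0 <= h -> on_layer h x -> on_layer h y -> le h x y \/ le h y x.
Proof. by move=> h0; have [_ [_ [_ total]]] := le_layer.1 h h0; exact: total. Qed.

Lemma le_lift h1 h2 x x' y y' z z' : 0 <= h1 -> h1 <= h2 ->
  is_anc h1 x y -> is_anc h1 x' y' -> le h1 y y' ->
  is_anc h2 x z -> is_anc h2 x' z' -> le h2 z z'.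
Proof.
move=> h0 h12 a a' le_yy' b b'.
exact: le_layer.2 h0 h12 a.1 a'.1 le_yy' (anc_lift h12 a b) (anc_lift h12 a' b').
Qed.

Lemma L_map_lift h (u1 u2 : V) z1 z2 : leaf u1 -> L u1 u2 ->
  is_anc h (leafpt u1) z1 -> is_anc h (leafpt u2) z2 -> le h z1 z2.
Proof.
move=> u1_leaf [y1 [y2 [a1 [a2 le12]]]] b1 b2.
have m_h := Rmax_lub _ _ _ (anc_leaf_height b1) (anc_leaf_height b2).
exact: le_lift (anc_leaf_nonneg u1_leaf a1) m_h a1 a2 le12 b1 b2.
Qed.

Lemma L_map_of_le h (u1 u2 : V) z1 z2 : leaf u1 -> leaf u2 ->
  is_anc h (leafpt u1) z1 -> is_anc h (leafpt u2) z2 -> z1 <> z2 -> le h z1 z2 -> L u1 u2.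
Proof.
move=> u1_leaf u2_leaf b1 b2 ne12 le12.
have [y1 [y2 [a1 a2]]] := leaf_ancs_at_max u1_leaf u2_leaf.
have m0 := anc_leaf_nonneg u1_leaf a1.
case: (layer_le_total m0 a1.1 a2.1) => [le_y12|le_y21]; first by exists y1, y2.
have m_h := Rmax_lub _ _ _ (anc_leaf_height b1) (anc_leaf_height b2).
case: ne12; apply: layer_le_anti (anc_leaf_nonneg u1_leaf b1) b1.1 b2.1 le12 _.
exact: le_lift m0 m_h a2 a1 le_y21 b2 b1.
Qed.

Lemma L_map_refl (u : V) : leaf u -> L u u.
Proof.
move=> u_leaf; have [y a] := leaf_anc_exists u_leaf (Rmax_l (f u) (f u)).
by exists y, y; do 2!split=> //; exact: layer_le_refl (anc_leaf_nonneg u_leaf a) a.1.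
Qed.

Lemma L_map_anti (u v : V) : leaf u -> leaf v -> L u v -> L v u -> u = v.
Proof.
move=> u_leaf v_leaf luv lvu; have [y1 [y2 [a1 a2]]] := leaf_ancs_at_max u_leaf v_leaf.
have e := layer_le_anti (anc_leaf_nonneg u_leaf a1) a1.1 a2.1
  (L_map_lift u_leaf luv a1 a2) (L_map_lift v_leaf lvu a2 a1); subst y2.
exact: leaf_common_anc_eq u_leaf v_leaf (Rmax_eq_or _ _) a1 a2.
Qed.

Lemma L_map_trans (a b c : V) : leaf a -> leaf b -> leaf c -> L a b -> L b c -> L a c.
Proof.
move=> a_leaf b_leaf c_leaf lab lbc.
pose H := Rmax (Rmax (f a) (f b)) (f c).
have fab : Rmax (f a) (f b) <= H := Rmax_l _ _.
have [A aA] := leaf_anc_exists a_leaf (Rle_trans _ _ _ (Rmax_l _ _) fab).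
have [B aB] := leaf_anc_exists b_leaf (Rle_trans _ _ _ (Rmax_r _ _) fab).
have [C aC] := leaf_anc_exists c_leaf (Rmax_r _ _ : f c <= H).
have H0 := anc_leaf_nonneg a_leaf aA.
have leAB := L_map_lift a_leaf lab aA aB.
have leBC := L_map_lift b_leaf lbc aB aC.
have leAC := layer_le_trans H0 aA.1 aB.1 aC.1 leAB leBC.
case: (classic (A = C)) => [eAC|neAC]; last exact: L_map_of_le a_leaf c_leaf aA aC neAC leAC.
(* Then A = B = C sits at a height H equal to the height of one of the three
   leaves, so that leaf lies above the other two. *)
subst C; have eAB := layer_le_anti H0 aA.1 aB.1 leAB leBC; subst B.
suff -> : a = c by exact: L_map_refl.
have [eH|eH] : (H = f a \/ H = f c) \/ H = f b.
  rewrite /H; case: (Rmax_eq_or (Rmax (f a) (f b)) (f c)) => ->; last by left; right.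
  by case: (Rmax_eq_or (f a) (f b)) => ->; [left; left | right].
- exact: leaf_common_anc_eq a_leaf c_leaf eH aA aC.
- by rewrite (leaf_common_anc_eq a_leaf b_leaf (or_intror eH) aA aB)
             (leaf_common_anc_eq c_leaf b_leaf (or_intror eH) aC aB).
Qed.

Lemma L_map_total (u v : V) : leaf u -> leaf v -> L u v \/ L v u.
Proof.
move=> u_leaf v_leaf; have [y1 [y2 [a1 a2]]] := leaf_ancs_at_max u_leaf v_leaf.
case: (layer_le_total (anc_leaf_nonneg u_leaf a1) a1.1 a2.1) => l; [left | right].
  by exists y1, y2.
by exists y2, y1; rewrite Rmax_comm.
Qed.

Lemma L_map_separates (u u1 u2 : V) z : leaf u -> leaf u1 -> leaf u2 ->
  L u1 u -> L u u2 -> is_lca (leafpt u1) (leafpt u2) z -> prec (leafpt u) z.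
Proof.
move=> u_leaf u1_leaf u2_leaf l1 l2 [z_valid [p1 [p2 _]]].
case: z z_valid p1 p2 => [c hz|] // z_valid p1 p2.
(* At H the ancestors of u and z coincide: if H = hz it is z itself, otherwise
   it is the leaf u, which then lies above u1. *)
pose H := Rmax hz (f u).
have [Z aZ] := anc_exists z_valid (Rmax_l hz (f u) : hz <= H).
have [U aU] := leaf_anc_exists u_leaf (Rmax_r hz (f u) : f u <= H).
have eZU := layer_le_anti (anc_leaf_nonneg u_leaf aU) aZ.1 aU.1
  (L_map_lift u1_leaf l1 (anc_trans p1 aZ) aU) (L_map_lift u_leaf l2 aU (anc_trans p2 aZ)).
subst U; have [eH|eH] : H = hz \/ H = f u := Rmax_eq_or _ _; rewrite eH in aZ aU.
- by rewrite -(anc_uniq (anc_self (conj z_valid erefl)) aZ) in aU; case: aU.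
- by rewrite -(leaf_common_anc_eq u1_leaf u_leaf (or_intror erefl) (anc_trans p1 aZ) aU).
Qed.

Lemma is_leaf_order_L_map : is_leaf_order L.
Proof.
split; last exact: L_map_separates.
split; first exact: L_map_refl.
split; first exact: L_map_anti.
by split; [exact: L_map_trans | exact: L_map_total].
Qed.

Lemma T_map_L_map h x1 x2 : 0 <= h -> on_layer h x1 -> on_layer h x2 ->
  T_map L h x1 x2 <-> le h x1 x2.
Proof.
move=> h0 o1 o2; split=> [[<-|all_L]|le12]; first exact: layer_le_refl.
  have [u1 u1_leaf p1] := exists_leaf_prec o1; have [u2 u2_leaf p2] := exists_leaf_prec o2.
  exact: L_map_lift u1_leaf (all_L u1 u2 u1_leaf u2_leaf p1 p2) (conj o1 p1) (conj o2 p2).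
case: (classic (x1 = x2)) => [e|ne]; [by left | right].
move=> u1 u2 u1_leaf u2_leaf p1 p2.
exact: L_map_of_le u1_leaf u2_leaf (conj o1 p1) (conj o2 p2) ne le12.
Qed.

End LayerOrderToLeafOrder.

Section LeafOrderToLayerOrder.
Variables (M : merge_tree) (lo : mt_V M -> mt_V M -> Prop).
Hypothesis lo_leaf : is_leaf_order lo.
Local Notation V := (mt_V M).
Local Notation T := (T_map lo).

Lemma lo_refl (u : V) : leaf u -> lo u u.
Proof. exact: lo_leaf.1.1. Qed.

Lemma lo_anti (u v : V) : leaf u -> leaf v -> lo u v -> lo v u -> u = v.
Proof. exact: lo_leaf.1.2.1. Qed.

Lemma lo_trans (u v w : V) : leaf u -> leaf v -> leaf w -> lo u v -> lo v w -> lo u w.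
Proof. exact: lo_leaf.1.2.2.1. Qed.

Lemma lo_total (u v : V) : leaf u -> leaf v -> lo u v \/ lo v u.
Proof. exact: lo_leaf.1.2.2.2. Qed.

Lemma lo_between_prec h x (p q c : V) : leaf p -> leaf q -> leaf c -> on_layer h x ->
  prec (leafpt p) x -> prec (leafpt q) x -> lo p c -> lo c q -> prec (leafpt c) x.
Proof.
move=> p_leaf q_leaf c_leaf [x_valid _] px qx pc cq.
have [z [z_valid [pz [qz z_least]]]] := lca_exists p q.
apply: prec_trans (z_least x x_valid px qx).
exact: lo_leaf.2 c_leaf p_leaf q_leaf pc cq (conj z_valid (conj pz (conj qz z_least))).
Qed.

Lemma lo_not_interleaved h x y (a1 a2 b1 b2 : V) : x <> y -> on_layer h x -> on_layer h y ->
  leaf a1 -> leaf a2 -> leaf b1 -> leaf b2 ->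
  prec (leafpt a1) x -> prec (leafpt a2) x -> prec (leafpt b1) y -> prec (leafpt b2) y ->
  lo a1 b1 -> lo b2 a2 -> False.
Proof.
move=> ne ox oy a1_leaf a2_leaf b1_leaf b2_leaf pa1 pa2 pb1 pb2 lab1 lba2; apply: ne.
case: (lo_total a2_leaf b1_leaf) => l.
- have pa2y := lo_between_prec b2_leaf b1_leaf a2_leaf oy pb2 pb1 lba2 l.
  exact: anc_uniq (conj ox pa2) (conj oy pa2y).
- have pb1x := lo_between_prec a1_leaf a2_leaf b1_leaf ox pa1 pa2 lab1 l.
  exact: anc_uniq (conj ox pb1x) (conj oy pb1).
Qed.

Lemma T_map_of_lo h x y (a b : V) : x <> y -> on_layer h x -> on_layer h y ->
  leaf a -> leaf b -> prec (leafpt a) x -> prec (leafpt b) y -> lo a b -> T h x y.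
Proof.
move=> ne ox oy a_leaf b_leaf pa pb lab; right=> a' b' a'_leaf b'_leaf pa' pb'.
case: (lo_total a'_leaf b'_leaf) => // lba'.
by case: (lo_not_interleaved ne ox oy a_leaf a'_leaf b_leaf b'_leaf pa pa' pb pb' lab lba').
Qed.

Lemma T_map_anti h x y : on_layer h x -> on_layer h y -> T h x y -> T h y x -> x = y.
Proof.
move=> ox oy [//|Txy] [//|Tyx].
have [a a_leaf pa] := exists_leaf_prec ox; have [b b_leaf pb] := exists_leaf_prec oy.
have eab := lo_anti a_leaf b_leaf (Txy a b a_leaf b_leaf pa pb) (Tyx b a b_leaf a_leaf pb pa).
by subst b; exact: anc_uniq (conj ox pa) (conj oy pb).
Qed.

Lemma T_map_trans h x y z : on_layer h y -> T h x y -> T h y z -> T h x z.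
Proof.
move=> oy [<-//|Txy] [<-|Tyz]; first by right.
right=> u1 u3 u1_leaf u3_leaf p1 p3.
have [u2 u2_leaf p2] := exists_leaf_prec oy.
exact: lo_trans u1_leaf u2_leaf u3_leaf
  (Txy _ _ u1_leaf u2_leaf p1 p2) (Tyz _ _ u2_leaf u3_leaf p2 p3).
Qed.

Lemma T_map_total h x y : on_layer h x -> on_layer h y -> T h x y \/ T h y x.
Proof.
move=> ox oy; case: (classic (x = y)) => [<-|ne]; first by left; left.
have [a a_leaf pa] := exists_leaf_prec ox; have [b b_leaf pb] := exists_leaf_prec oy.
case: (lo_total a_leaf b_leaf) => l; [left | right].
- exact: T_map_of_lo ne ox oy a_leaf b_leaf pa pb l.
- exact: T_map_of_lo (not_eq_sym ne) oy ox b_leaf a_leaf pb pa l.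
Qed.

Lemma T_map_lift h1 h2 x1 x2 y1 y2 : h1 <= h2 -> on_layer h1 x1 -> on_layer h1 x2 ->
  T h1 x1 x2 -> is_anc h2 x1 y1 -> is_anc h2 x2 y2 -> T h2 y1 y2.
Proof.
move=> h12 o1 o2 [<-|T12] a1 a2; first by left; exact: anc_uniq a1 a2.
case: (classic (y1 = y2)) => [e|ne]; first by left.
have [u1 u1_leaf p1] := exists_leaf_prec o1; have [u2 u2_leaf p2] := exists_leaf_prec o2.
exact: T_map_of_lo ne a1.1 a2.1 u1_leaf u2_leaf (prec_trans p1 a1.2) (prec_trans p2 a2.2)
  (T12 u1 u2 u1_leaf u2_leaf p1 p2).
Qed.

Lemma is_layer_order_T_map : is_layer_order T.
Proof.
split=> [h _|h1 h2 x1 x2 y1 y2 _ h12 o1 o2]; last exact: T_map_lift.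
split; first by move=> x _; left.
split; first exact: T_map_anti.
by split=> [x y z _ oy _|]; [exact: T_map_trans | exact: T_map_total].
Qed.

Lemma L_map_T_map (u1 u2 : V) : leaf u1 -> leaf u2 -> L_map T u1 u2 <-> lo u1 u2.
Proof.
move=> u1_leaf u2_leaf; split=> [[y1 [y2 [a1 [a2 [e|T12]]]]]|l12].
- subst y2; rewrite (leaf_common_anc_eq u1_leaf u2_leaf (Rmax_eq_or _ _) a1 a2).
  exact: lo_refl.
- exact: T12 u1 u2 u1_leaf u2_leaf a1.2 a2.2.
have [y1 [y2 [a1 a2]]] := leaf_ancs_at_max u1_leaf u2_leaf.
exists y1, y2; do 2!split=> //.
case: (classic (y1 = y2)) => [e|ne]; first by left.
exact: T_map_of_lo ne a1.1 a2.1 u1_leaf u2_leaf a1.2 a2.2 l12.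
Qed.

End LeafOrderToLayerOrder.

Theorem theorem10 (M : merge_tree) :
  (forall le : R -> pt M -> pt M -> Prop,
     is_layer_order le ->
     is_leaf_order (L_map le) /\
     (forall h, 0 <= h -> forall x1 x2, on_layer h x1 -> on_layer h x2 ->
        (T_map (L_map le) h x1 x2 <-> le h x1 x2))) /\
  (forall lo : mt_V M -> mt_V M -> Prop,
     is_leaf_order lo ->
     is_layer_order (T_map lo) /\
     (forall u1 u2, leaf u1 -> leaf u2 -> (L_map (T_map lo) u1 u2 <-> lo u1 u2))).
Proof.
split=> [le le_layer|lo lo_leaf]; split.
- exact: is_leaf_order_L_map.
- move=> h h0 x1 x2; exact: T_map_L_map.
- exact: is_layer_order_T_map.
- exact: L_map_T_map.
Qed.
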